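(* Let $\mathcal M=(M,\le,{}^\perp)$ be a complete orthomodular lattice, $L$ an involutive submonoid of $\mathbf{Lin}(\mathcal M)$ containing all Sasaki projections, and $\mathscr P(L)=(\mathscr P(L),\bigcup,\odot,{}^*,{\sim},\{\mathrm{id}_M\})$ the corresponding involutive generalized dynamic algebra. Then $\mathscr P(L)$ is a semi-Foulis dynamic algebra.
   Context: For an orthomodular lattice and $m\in M$, $\pi_m(x)=m\wedge(m^\perp\vee x)$. A map $f\colon M\to M$ is linear if there is $g\colon M\to M$ (unique, written $f^*$) with $f(x)\le y^\perp\iff x\le g(y)^\perp$ for all $x,y$. $\mathbf{Lin}(\mathcal M)$ is the involutive monoid of linear maps under composition, $f\mapsto f^*$, $\mathrm{id}_M$. $\mathscr P(L)$ is the powerset of $L$ with union, $A\odot B=\{a\circ b\}$, $A^*=\{a^*\mid a\in A\}$, ${\sim}A=\{\pi_{(\bigvee_{a\in A}a(1))^\perp}\}$. An involutive generalized dynamic algebra $(K,\bigsqcup,\odot,{}^*,{\sim},e)$ has test set $\widetilde K=\{{\sim}k\}$, joins $\bigvee W={\sim}{\sim}(\bigsqcup W)$ on $\widetilde K$, $w^\perp={\sim}w$, and $k\preceq l$ iff $\bigvee\{k,l\}=l$; it is a semi-Foulis dynamic algebra if $(\widetilde K,\preceq,{}^\perp)$ is a complete orthomodular lattice. *)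

Set Implicit Arguments.

Definition is_lub {T : Type} (C : T -> Prop) (le : T -> T -> Prop)
  (S : T -> Prop) (u : T) : Prop :=
  C u /\ (forall x, S x -> le x u) /\
  (forall v, C v -> (forall x, S x -> le x v) -> le u v).

Definition is_glb {T : Type} (C : T -> Prop) (le : T -> T -> Prop)
  (S : T -> Prop) (u : T) : Prop :=
  C u /\ (forall x, S x -> le u x) /\
  (forall v, C v -> (forall x, S x -> le v x) -> le v u).

Definition pair {T : Type} (x y : T) : T -> Prop := fun z => z = x \/ z = y.

Definition complete_OML_on {T : Type} (C : T -> Prop)
  (le : T -> T -> Prop) (orth : T -> T) : Prop :=
  (forall x, C x -> le x x) /\
  (forall x y, C x -> C y -> le x y -> le y x -> x = y) /\
  (forall x y z, C x -> C y -> C z -> le x y -> le y z -> le x z) /\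
  (forall S, (forall x, S x -> C x) -> exists u, is_lub C le S u) /\
  (forall x, C x -> C (orth x)) /\
  (forall x, C x -> orth (orth x) = x) /\
  (forall x y, C x -> C y -> le x y -> le (orth y) (orth x)) /\
  (forall x z, C x -> C z -> le z x -> le z (orth x) ->
     forall w, C w -> le z w) /\ (* x /\ x^perp = 0 *)
  (* orthomodular law: x <= y -> y = x \/ (y /\ x^perp) *)
  (forall x y m u, C x -> C y -> le x y ->
     is_glb C le (pair y (orth x)) m ->
     is_lub C le (pair x m) u -> u = y).

Definition cOML (M : Type) (le : M -> M -> Prop) (orth : M -> M)
  (sup : (M -> Prop) -> M) : Prop :=
  complete_OML_on (fun _ => True) le orth /\
  (forall S, is_lub (fun _ => True) le S (sup S)).

Section OMLops.
Variables (M : Type) (le : M -> M -> Prop) (orth : M -> M)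
  (sup : (M -> Prop) -> M).
Definition ljoin (x y : M) : M := sup (pair x y).
Definition lmeet (x y : M) : M := orth (ljoin (orth x) (orth y)).
Definition ltop : M := sup (fun _ => True).

Definition sasaki (m : M) : M -> M := fun x => lmeet m (ljoin (orth m) x).

Definition adjoint_of (f g : M -> M) : Prop :=
  forall x y, le (f x) (orth y) <-> le x (orth (g y)).

Definition linear (f : M -> M) : Prop := exists g, adjoint_of f g.

Definition involutive_submonoid_Lin (L : (M -> M) -> Prop) : Prop :=
  (forall f, L f -> linear f) /\
  L (fun x => x) /\
  (forall f g, L f -> L g -> L (fun x => f (g x))) /\
  (forall f g, L f -> adjoint_of f g -> L g).

Definition PL_carrier (L : (M -> M) -> Prop) (A : (M -> M) -> Prop) : Prop :=
  forall a, A a -> L a.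
Definition PL_union (W : ((M -> M) -> Prop) -> Prop) : (M -> M) -> Prop :=
  fun f => exists A, W A /\ A f.
Definition PL_odot (A B : (M -> M) -> Prop) : (M -> M) -> Prop :=
  fun f => exists a b, A a /\ B b /\ f = (fun x => a (b x)).
Definition PL_star (A : (M -> M) -> Prop) : (M -> M) -> Prop :=
  fun g => exists a, A a /\ adjoint_of a g.
Definition PL_neg (A : (M -> M) -> Prop) : (M -> M) -> Prop :=
  fun f => f = sasaki (orth (sup (fun m => exists a, A a /\ m = a ltop))).
Definition PL_unit : (M -> M) -> Prop := fun f => f = (fun x => x).
End OMLops.

Definition semi_Foulis {K : Type} (Kc : K -> Prop)
  (bigU : (K -> Prop) -> K) (neg : K -> K) : Prop :=
  let tests := fun k => exists l, Kc l /\ k = neg l in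
  let tjoin := fun W => neg (neg (bigU W)) in
  let prec := fun k l => tjoin (pair k l) = l in
  complete_OML_on tests prec neg.

From Stdlib Require Import Setoid.

(* The test set of P(L) consists exactly of the singletons {pi_m}, since
   ~A = {pi_m} for m = (\/_{a in A} a(1))^perp.  Because pi_m(1) = m, the map
   m |-> {pi_m} turns joins of M into the test joins ~~(A u B) and the
   orthocomplement of M into ~; it is therefore an isomorphism from M onto
   the tests, and the complete orthomodular structure of M carries over. *)

Section LubTransport.

Context {A B : Type} {leA : A -> A -> Prop} {C : B -> Prop}
  {leB : B -> B -> Prop} {phi : A -> B}.
Hypothesis C_image : forall y, C y <-> exists x, y = phi x.
Hypothesis le_phi : forall x x', leB (phi x) (phi x') <-> leA x x'.

Lemma is_lub_phi (S : B -> Prop) (S' : A -> Prop) (u : A) :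
  (forall y, S y -> C y) -> (forall x, S (phi x) <-> S' x) ->
  is_lub C leB S (phi u) <-> is_lub (fun _ => True) leA S' u.
Proof.
  intros SC SS'. split.
  - intros [_ [ub least]]. split; [exact I | split].
    + intros x S'x. apply le_phi, ub, SS', S'x.
    + intros v _ Hv. apply le_phi, least; [apply C_image; eauto |].
      intros y Sy. destruct (proj1 (C_image y) (SC y Sy)) as [x ->].
      apply le_phi, Hv, SS', Sy.
  - intros [_ [ub least]]. split; [apply C_image; eauto | split].
    + intros y Sy. destruct (proj1 (C_image y) (SC y Sy)) as [x ->].
      apply le_phi, ub, SS', Sy.
    + intros v Cv Hv. destruct (proj1 (C_image v) Cv) as [w ->].
      apply le_phi, least; [exact I |].
      intros x S'x. apply le_phi, Hv, SS', S'x.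
Qed.

End LubTransport.

Lemma is_glb_phi {A B : Type} {leA : A -> A -> Prop} {C : B -> Prop}
  {leB : B -> B -> Prop} {phi : A -> B} (S : B -> Prop) (S' : A -> Prop) (u : A) :
  (forall y, C y <-> exists x, y = phi x) ->
  (forall x x', leB (phi x) (phi x') <-> leA x x') ->
  (forall y, S y -> C y) -> (forall x, S (phi x) <-> S' x) ->
  is_glb C leB S (phi u) <-> is_glb (fun _ => True) leA S' u.
Proof.
  intros C_image le_phi.
  exact (is_lub_phi (leA := fun x y => leA y x) (leB := fun x y => leB y x)
           C_image (fun x x' => le_phi x' x) S S' u).
Qed.

Section OMLTransport.

Context {A B : Type} {leA : A -> A -> Prop} {orthA : A -> A} {C : B -> Prop}
  {leB : B -> B -> Prop} {orthB : B -> B} {phi : A -> B}.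
Hypothesis C_image : forall y, C y <-> exists x, y = phi x.
Hypothesis le_phi : forall x x', leB (phi x) (phi x') <-> leA x x'.
Hypothesis orth_phi : forall x, orthB (phi x) = phi (orthA x).
Hypothesis oml : complete_OML_on (fun _ => True) leA orthA.

Lemma phi_inj (x x' : A) : phi x = phi x' -> x = x'.
Proof.
  destruct oml as (refl & antisym & _).
  intros E. apply antisym; try exact I; apply le_phi;
    [rewrite <- E | rewrite E]; apply le_phi, refl, I.
Qed.

Lemma pair_phi (a b x : A) : pair (phi a) (phi b) (phi x) <-> pair a b x.
Proof.
  unfold pair. split.
  - intros [E | E]; apply phi_inj in E; auto.
  - intros [-> | ->]; auto.
Qed.

Lemma pair_phi_C (a b : A) (y : B) : pair (phi a) (phi b) y -> C y.
Proof. intros [-> | ->]; apply C_image; eauto. Qed.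

Lemma complete_OML_on_transport : complete_OML_on C leB orthB.
Proof.
  destruct oml as (refl & antisym & trans & complete & _ & orth_inv
                   & orth_anti & orth_disj & orthomod).
  repeat split.
  - intros y Cy. apply C_image in Cy as [x ->]. apply le_phi, refl, I.
  - intros y y' Cy Cy'. apply C_image in Cy as [x ->]. apply C_image in Cy' as [x' ->].
    rewrite !le_phi. intros l1 l2. f_equal. apply antisym; auto.
  - intros y y' y'' Cy Cy' Cy''. apply C_image in Cy as [x ->].
    apply C_image in Cy' as [x' ->]. apply C_image in Cy'' as [x'' ->].
    rewrite !le_phi. apply trans; exact I.
  - intros S SC. destruct (complete (fun x => S (phi x)) (fun _ _ => I)) as [u lub].
    exists (phi u). apply (is_lub_phi C_image le_phi S (fun x => S (phi x))); easy.
  - intros y Cy. apply C_image in Cy as [x ->]. rewrite orth_phi. apply C_image; eauto.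
  - intros y Cy. apply C_image in Cy as [x ->]. rewrite !orth_phi, orth_inv; easy.
  - intros y y' Cy Cy'. apply C_image in Cy as [x ->]. apply C_image in Cy' as [x' ->].
    rewrite !orth_phi, !le_phi. apply orth_anti; exact I.
  - intros y z Cy Cz. apply C_image in Cy as [x ->]. apply C_image in Cz as [w ->].
    rewrite orth_phi, !le_phi. intros l1 l2 y' Cy'. apply C_image in Cy' as [x' ->].
    apply le_phi, (orth_disj x w); easy.
  - intros y y' m u Cy Cy'. apply C_image in Cy as [a ->]. apply C_image in Cy' as [b ->].
    rewrite le_phi, orth_phi. intros ab glb lub.
    destruct (proj1 (C_image m) (proj1 glb)) as [c ->].
    destruct (proj1 (C_image u) (proj1 lub)) as [d ->].
    apply (is_glb_phi _ (pair b (orthA a)) c C_image le_phi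
             (pair_phi_C _ _) (pair_phi _ _)) in glb.
    apply (is_lub_phi C_image le_phi _ (pair a c) d
             (pair_phi_C _ _) (pair_phi _ _)) in lub.
    f_equal. apply (orthomod a b c d); easy.
Qed.

End OMLTransport.

Section CompleteOML.

Context {M : Type} {le : M -> M -> Prop} {orth : M -> M} {sup : (M -> Prop) -> M}.
Hypothesis H : cOML le orth sup.

Lemma le_refl (x : M) : le x x.
Proof. destruct H as [[refl _] _]. apply refl, I. Qed.

Lemma orth_involutive (x : M) : orth (orth x) = x.
Proof. destruct H as [(_ & _ & _ & _ & _ & orth_inv & _) _]. apply orth_inv, I. Qed.

Lemma sup_eq_lub (S : M -> Prop) (u : M) : is_lub (fun _ => True) le S u -> sup S = u.
Proof.
  destruct H as [(_ & antisym & _) sup_lub].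
  destruct (sup_lub S) as [_ [ub least]]. intros [_ [ub' least']].
  apply antisym; try exact I; [apply least | apply least']; easy.
Qed.

Lemma sup_ext (S S' : M -> Prop) : (forall x, S x <-> S' x) -> sup S = sup S'.
Proof.
  intros E. apply sup_eq_lub. destruct (proj2 H S') as [_ [ub least]].
  split; [exact I | split].
  - intros x Sx. apply ub, E, Sx.
  - intros v _ Hv. apply least; [exact I |]. intros x S'x. apply Hv, E, S'x.
Qed.

Lemma ljoin_le_iff (a b c : M) : le (ljoin sup a b) c <-> le a c /\ le b c.
Proof.
  destruct H as [(_ & _ & trans & _) sup_lub].
  destruct (sup_lub (pair a b)) as [_ [ub least]]. unfold ljoin. split.
  - intros l. split; apply trans with (y := sup (pair a b)); try exact I; auto;
      apply ub; unfold pair; auto.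
  - intros [la lb]. apply least; [exact I |]. intros x [-> | ->]; auto.
Qed.

Lemma ljoin_eq_r (a b : M) : ljoin sup a b = b <-> le a b.
Proof.
  split.
  - intros E. rewrite <- E. apply (ljoin_le_iff a b), le_refl.
  - intros ab. apply sup_eq_lub. split; [exact I | split].
    + intros x [-> | ->]; [exact ab | apply le_refl].
    + intros v _ Hv. apply Hv. unfold pair; auto.
Qed.

Lemma ljoin_comm (a b : M) : ljoin sup a b = ljoin sup b a.
Proof. apply sup_ext. unfold pair. tauto. Qed.

Lemma le_top (x : M) : le x (ltop sup).
Proof. apply (proj2 H (fun _ => True)); exact I. Qed.

Lemma bot_le (x : M) : le (orth (ltop sup)) x.
Proof.
  destruct H as [(_ & _ & _ & _ & _ & _ & orth_anti & _) _].
  rewrite <- (orth_involutive x). apply orth_anti; try exact I. apply le_top.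
Qed.

Lemma sasaki_top (m : M) : sasaki orth sup m (ltop sup) = m.
Proof.
  unfold sasaki, lmeet.
  rewrite (proj2 (ljoin_eq_r _ _) (le_top (orth m))).
  rewrite ljoin_comm, (proj2 (ljoin_eq_r _ _) (bot_le (orth m))).
  apply orth_involutive.
Qed.

End CompleteOML.

Definition sasaki_test {M : Type} (orth : M -> M) (sup : (M -> Prop) -> M) (m : M)
  : (M -> M) -> Prop := fun f => f = sasaki orth sup m.

Section SasakiTests.

Context {M : Type} {le : M -> M -> Prop} {orth : M -> M} {sup : (M -> Prop) -> M}.
Hypothesis H : cOML le orth sup.

Lemma sasaki_test_inj (m n : M) : sasaki_test orth sup m = sasaki_test orth sup n -> m = n.
Proof.
  intros E.
  assert (Em : sasaki_test orth sup n (sasaki orth sup m)) by (rewrite <- E; reflexivity).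
  rewrite <- (sasaki_top H m), <- (sasaki_top H n), Em. reflexivity.
Qed.

Lemma PL_neg_sasaki_test (m : M) :
  PL_neg orth sup (sasaki_test orth sup m) = sasaki_test orth sup (orth m).
Proof.
  apply (f_equal (fun x => sasaki_test orth sup (orth x))).
  transitivity (ljoin sup m m); [| apply (ljoin_eq_r H), (le_refl H)].
  apply (sup_ext H). unfold sasaki_test, pair. intros x. split.
  - intros [a [-> ->]]. left. apply (sasaki_top H).
  - intros [-> | ->]; exists (sasaki orth sup m); split; auto; symmetry; apply (sasaki_top H).
Qed.

Lemma PL_test_join_sasaki_test (m n : M) :
  PL_neg orth sup (PL_neg orth sup
    (PL_union (pair (sasaki_test orth sup m) (sasaki_test orth sup n))))
  = sasaki_test orth sup (ljoin sup m n).
Proof.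
  rewrite <- (orth_involutive H (ljoin sup m n)), <- PL_neg_sasaki_test.
  f_equal. apply (f_equal (fun x => sasaki_test orth sup (orth x))).
  apply (sup_ext H). unfold sasaki_test, pair. intros x. split.
  - intros [a [[A [[-> | ->] ->]] ->]]; rewrite (sasaki_top H); auto.
  - intros [-> | ->]; [exists (sasaki orth sup m) | exists (sasaki orth sup n)];
      (split; [| symmetry; apply (sasaki_top H)]).
    + exists (sasaki_test orth sup m). split; [left |]; reflexivity.
    + exists (sasaki_test orth sup n). split; [right |]; reflexivity.
Qed.

Lemma PL_test_le_sasaki_test (m n : M) :
  PL_neg orth sup (PL_neg orth sup
    (PL_union (pair (sasaki_test orth sup m) (sasaki_test orth sup n)))) = sasaki_test orth sup n
  <-> le m n.
Proof.
  rewrite PL_test_join_sasaki_test, <- (ljoin_eq_r H). split.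
  - apply sasaki_test_inj.
  - intros ->. reflexivity.
Qed.

Lemma PL_tests_sasaki_test (L : (M -> M) -> Prop) (k : (M -> M) -> Prop) :
  (forall m, L (sasaki orth sup m)) ->
  (exists l, PL_carrier L l /\ k = PL_neg orth sup l) <-> exists m, k = sasaki_test orth sup m.
Proof.
  intros L_sasaki. split.
  - intros [l [_ ->]]. eexists. reflexivity.
  - intros [m ->]. exists (sasaki_test orth sup (orth m)). split.
    + intros a ->. apply L_sasaki.
    + rewrite PL_neg_sasaki_test, (orth_involutive H). reflexivity.
Qed.

End SasakiTests.

Theorem theorem3p11 (M : Type) (le : M -> M -> Prop) (orth : M -> M)
  (sup : (M -> Prop) -> M) (L : (M -> M) -> Prop) :
  cOML le orth sup ->
  involutive_submonoid_Lin le orth L ->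
  (forall m : M, L (sasaki orth sup m)) ->
  semi_Foulis (PL_carrier L) (@PL_union M) (PL_neg orth sup).
Proof.
  intros H _ L_sasaki.
  exact (complete_OML_on_transport
           (fun k => PL_tests_sasaki_test H L k L_sasaki)
           (PL_test_le_sasaki_test H) (PL_neg_sasaki_test H) (proj1 H)).
Qed.
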